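(* Let $p$ be an odd prime, $M$ the sub-add move matrix, and $t,k$ as in the context. (a) If $\Gamma_{M,\,p}$ has no secondary cycles, then $\Gamma_{M,\,p}$ has exactly $\frac{p^2-1}{k}$ primary cycles. (b) If $\Gamma_{M,\,p}$ has secondary cycles, then all of them have a common length $s$ for some $s\in\{t,2t\}$, and $\Gamma_{M,\,p}$ has exactly $\frac{p-1}{s}$ secondary cycles and $\frac{p^2-p}{k}$ primary cycles.
   Context: The sub-add move matrix is $M=\begin{pmatrix}1&-1\\1&1\end{pmatrix}$. $\Gamma_{M,\,p}$ is the directed graph with vertex set $\mathbb Z_p^2$ and arcs $((a,b),(a-b,a+b))$ (mod $p$; loops allowed). Let $t$ be the multiplicative order of $-4$ in $GF(p)$ and $k=4t$ (the $\mathbb Z_p$-order of $M$). A directed cycle is a cycle in the underlying undirected graph such that in the induced directed subgraph every vertex has in- and out-degree $1$; a loop is a directed $1$-cycle, a pair of opposite arcs a directed $2$-cycle. A primary cycle is a directed cycle of length $k$; a secondary cycle is a directed cycle that is neither primary nor a $1$-cycle. *)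

From HB Require Import structures.
From mathcomp Require Import all_boot all_order all_algebra.
Set Implicit Arguments. Unset Strict Implicit. Unset Printing Implicit Defensive.
Import GRing.Theory.
Local Open Scope ring_scope.

(* A directed cycle in a digraph (V, e) (loops allowed), as a vertex set C:
   C is nonempty, its elements can be listed without repetition as
   c_0, ..., c_{n-1} with arcs c_i -> c_{i+1 mod n} (so the underlying
   undirected graph contains a cycle on C; n = 1 is a loop, n = 2 a pair of
   opposite arcs), and in the directed subgraph induced on C every vertex has
   in-degree and out-degree exactly 1. Its length is #|C|. *)
Definition dcycleb (V : finType) (e : rel V) (C : {set V}) : bool :=
  [&& (0 < #|C|)%N,
      [exists c : (#|C|).-tuple V, [&& uniq c, [set x in c] == C & cycle e c]]
    & [forall x in C, (#|[set y in C | e x y]| == 1%N)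
                      && (#|[set y in C | e y x]| == 1%N)]].

Definition subadd_arc (p : nat) : rel ('F_p * 'F_p) :=
  fun u v => v == (u.1 - u.2, u.1 + u.2).

Definition is_mult_order (R : ringType) (x : R) (t : nat) : Prop :=
  (0 < t)%N /\ x ^+ t = 1 /\ (forall n : nat, (0 < n)%N -> x ^+ n = 1 -> (t <= n)%N).

Definition primary_cycles (p k : nat) : {set {set 'F_p * 'F_p}} :=
  [set C | dcycleb (@subadd_arc p) C & #|C| == k].

Definition secondary_cycles (p k : nat) : {set {set 'F_p * 'F_p}} :=
  [set C | [&& dcycleb (@subadd_arc p) C, #|C| != k & #|C| != 1%N]].

From mathcomp Require Import all_boot all_order all_algebra.
From mathcomp Require Import ring zify.
Set Implicit Arguments. Unset Strict Implicit. Unset Printing Implicit Defensive.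
Import GRing.Theory.

(* The digraph is the functional graph of the bijection
   sigma (a, b) = (a - b, a + b) of F_p^2, so its directed cycles are exactly
   the sigma-orbits.  Since sigma^4 is multiplication by -4, the orbit length
   of a point x <> 0 divides 4t and is a multiple of t; it is less than 4t
   exactly when sigma^(2t) fixes x.  For even t, sigma^(2t) is the scalar
   (-4)^(t/2) <> 1, so there are no such points.  For odd t,
   sigma^(2t) = (-4)^((t-1)/2) sigma^2 with sigma^2 (a, b) = (-2b, 2a), and
   its fixed points form a line through 0.  Scalars commute with sigma, so
   the p - 1 nonzero points of that line all have the same orbit length, and
   the counts follow by partitioning the points into orbits. *)

Section Orbits.

Variables (T : finType) (f : T -> T).
Hypothesis f_inj : injective f.

Definition orbit_set x : {set T} := [set y | fconnect f x y].

Definition orbits : {set {set T}} := [set orbit_set x | x : T].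

Lemma card_orbit_set x : #|orbit_set x| = order f x.
Proof. by apply: eq_card => y; rewrite inE. Qed.

Lemma orbit_set_eq x y : fconnect f x y -> orbit_set x = orbit_set y.
Proof.
move=> xy; apply/setP => z.
by rewrite !inE (same_connect (fconnect_sym f_inj) xy).
Qed.

Lemma forder_dvdn x n : (order f x %| n) = (iter n f x == x).
Proof.
have iter_mul q : iter (q * order f x) f x = x.
  by elim: q => // q IHq; rewrite mulSn iterD IHq (iter_order f_inj).
apply/idP/eqP => [/dvdnP[q ->] // | fnx].
have r_lt := ltn_pmod n (order_gt0 f x).
move: fnx; rewrite {1}(divn_eq n (order f x)) addnC iterD iter_mul => fnx.
by rewrite /dvdn -(findex_iter r_lt) fnx findex0.
Qed.

Lemma dcycle_orbits C : dcycleb (fun u v => v == f u) C = (C \in orbits).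
Proof.
have frelE : (fun u v => v == f u) =2 frel f by move=> u v /=; rewrite eq_sym.
apply/idP/imsetP => [|[x _ ->]].
  case/and3P => /card_gt0P[x xC] /existsP[c /and3P[_ /eqP cC c_cycle]] _.
  exists x => //; apply/setP => y; rewrite -cC inE in xC.
  by rewrite -cC !inE (fconnect_cycle _ xC) // -(eq_cycle frelE).
apply/and3P; split.
- by rewrite card_orbit_set order_gt0.
- have size_orbit_set : size (orbit f x) == #|orbit_set x|.
    by rewrite size_orbit card_orbit_set.
  apply/existsP; exists (Tuple size_orbit_set); rewrite /= orbit_uniq.
  rewrite (eq_cycle frelE) (cycle_orbit f_inj) andbT.
  by apply/eqP/setP => y; rewrite !inE fconnect_orbit.
apply/forallP => y; apply/implyP; rewrite inE => xy; apply/andP; split.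
  rewrite (_ : [set z in _ | z == f y] = [set f y]) ?cards1 //.
  apply/setP => z; rewrite !inE andb_idl // => /eqP ->.
  exact: connect_trans xy (fconnect1 f y).
rewrite (_ : [set z in _ | y == f z] = [set finv f y]) ?cards1 //.
apply/setP => z; rewrite !inE; apply/andP/eqP => [[_ /eqP ->] | ->].
  by rewrite (finv_f f_inj).
rewrite (f_finv f_inj) eqxx; split=> //.
exact: connect_trans xy (fconnect_finv f y).
Qed.

Lemma card_orbits_uniform (P : pred nat) n :
  (forall x, P (order f x) -> order f x = n) ->
  #|[set C in orbits | P #|C|]| * n = #|[set x | P (order f x)]|.
Proof.
move=> P_n; set A := [set x | P (order f x)].
have orbitsA : [set C in orbits | P #|C|] = orbit_set @: A.
  apply/setP => C; rewrite inE.
  apply/andP/imsetP => [[/imsetP[x _ ->] PC] | [x]].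
    by exists x; rewrite // inE -card_orbit_set.
  by rewrite inE -card_orbit_set => Px ->; split=> //; apply: imset_f.
have partA : orbit_set @: A = equivalence_partition (fconnect f) A.
  apply: eq_in_imset => x; rewrite inE => Px; apply/setP => y.
  rewrite !inE -!card_orbit_set andb_idl // => /orbit_set_eq <-.
  by rewrite card_orbit_set.
rewrite orbitsA; apply/esym/card_uniform_partition.
  by move=> _ /imsetP[x + ->]; rewrite inE card_orbit_set => /P_n.
rewrite partA; apply: equivalence_partitionP => x y z _ _ _.
split; first exact: connect0.
by move=> /orbit_set_eq /setP /(_ z); rewrite !inE.
Qed.

End Orbits.

Local Open Scope ring_scope.

Section SubAdd.

Variable R : comNzRingType.
Implicit Types (a : R) (x : R * R).

Definition subadd x : R * R := (x.1 - x.2, x.1 + x.2).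

(* R * R is a module over R^o, not over R itself, hence an explicit scaling. *)
Definition dilate a x : R * R := (a * x.1, a * x.2).

Lemma dilate1 x : dilate 1 x = x.
Proof. by case: x => a b; rewrite /dilate !mul1r. Qed.

Lemma dilateA a b x : dilate a (dilate b x) = dilate (a * b) x.
Proof. by congr pair; rewrite /= mulrA. Qed.

Lemma subadd_dilate a x : subadd (dilate a x) = dilate a (subadd x).
Proof. by congr pair; rewrite /= ?mulrBr ?mulrDr. Qed.

Lemma iter_subadd_dilate n a x :
  iter n subadd (dilate a x) = dilate a (iter n subadd x).
Proof. by elim: n => //= n ->; rewrite subadd_dilate. Qed.

Lemma iter2_subadd x : iter 2 subadd x = (- (x.2 *+ 2), x.1 *+ 2).
Proof. by congr pair; rewrite /=; ring. Qed.

Lemma iter4_subadd x : iter 4 subadd x = dilate (-4) x.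
Proof. by congr pair; rewrite /=; ring. Qed.

Lemma iter_subadd_mul4 n x : iter (4 * n) subadd x = dilate ((-4) ^+ n) x.
Proof.
elim: n => [|n IHn]; first by rewrite dilate1.
by rewrite mulnS iterD IHn iter4_subadd dilateA exprS.
Qed.

Lemma iter_subadd_double n x :
  iter (2 * n) subadd x = dilate ((-4) ^+ n./2) (iter (2 * odd n) subadd x).
Proof.
rewrite -{1}(odd_double_half n) -mul2n mulnDr mulnA iterD.
by rewrite -iter_subadd_dilate iter_subadd_mul4.
Qed.

Lemma subadd_eq_id x : (subadd x == x) = (x == 0).
Proof.
case: x => a b; apply/eqP/eqP => [[ab_a ab_b] | [-> ->]].
  have b0 : b = 0 by apply/oppr_inj/(@addrI _ a); rewrite ab_a oppr0 addr0.
  have a0 : a = 0 by apply: (@addIr _ b); rewrite ab_b add0r.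
  by rewrite a0 b0.
by rewrite /subadd /= subr0 addr0.
Qed.

End SubAdd.

Arguments subadd {R} x.

Lemma is_mult_order_prim (R : nzRingType) (z : R) t :
  is_mult_order z t -> t.-primitive_root z.
Proof.
case=> t_gt0 [zt z_min]; have [m prim_m m_dvd] := prim_order_exists t_gt0 zt.
suff -> : t = m by [].
apply/anti_leq; rewrite (dvdn_leq t_gt0 m_dvd) andbT.
exact: z_min (prim_order_gt0 prim_m) (prim_expr_order prim_m).
Qed.

Lemma dilate_eq_id (F : fieldType) (a : F) x :
  x != 0 -> (dilate a x == x) = (a == 1).
Proof.
have fixE y : (a * y == y) = (a == 1) || (y == 0).
  by rewrite -subr_eq0 -{2}[y]mul1r -mulrBl mulf_eq0 subr_eq0.
case: x => b c; rewrite /dilate !xpair_eqE /= !fixE.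
by case: (a == 1); case: (b == 0); case: (c == 0).
Qed.

Lemma subadd_inj (F : fieldType) : (2%:R : F) != 0 -> injective (@subadd F).
Proof.
move=> two_neq0; have m4_neq0 : (-4 : F) != 0.
  by rewrite oppr_eq0 (natrM _ 2 2) mulf_neq0.
pose unsubadd y := dilate (-4)^-1 (iter 3 (@subadd F) y).
apply: (@can_inj _ _ _ unsubadd) => x.
by rewrite /unsubadd -iterSr iter4_subadd dilateA mulVf // dilate1.
Qed.

Section SubAddFinField.

Variables (F : finFieldType) (t : nat).
Hypotheses (two_neq0 : (2%:R : F) != 0) (ht : is_mult_order (-4 : F) t).
Implicit Types x : F * F.

Let subadd_injF := subadd_inj two_neq0.
Let prim_m4 := is_mult_order_prim ht.
Let t_gt0 := prim_order_gt0 prim_m4.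

Lemma order_subadd_dvd x : (order subadd x %| 4 * t)%N.
Proof.
by rewrite forder_dvdn // iter_subadd_mul4 prim_expr_order // dilate1.
Qed.

Lemma dvdn_order_subadd x : x != 0 -> (t %| order subadd x)%N.
Proof.
move=> x_neq0; have : iter (4 * order subadd x) subadd x == x.
  by rewrite -forder_dvdn // dvdn_mull.
by rewrite iter_subadd_mul4 dilate_eq_id // -(prim_order_dvd prim_m4).
Qed.

Lemma order_subadd_eq1 x : (order subadd x == 1)%N = (x == 0).
Proof. by rewrite -dvdn1 forder_dvdn // subadd_eq_id. Qed.

Lemma order_subadd_dilate a x :
  a != 0 -> order subadd (dilate a x) = order subadd x.
Proof.
have dvd (b : F) y : (order subadd (dilate b y) %| order subadd y)%N.
  by rewrite forder_dvdn // iter_subadd_dilate (iter_order subadd_injF).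
move=> a_neq0; apply/eqP; rewrite eqn_dvd dvd /=.
by rewrite -{1}[x]dilate1 -(mulVf a_neq0) -dilateA dvd.
Qed.

Lemma order_subadd_cases x : x != 0 ->
  [\/ order subadd x = t, order subadd x = (2 * t)%N
    | order subadd x = (4 * t)%N].
Proof.
move=> x_neq0; have /dvdnP[q order_x] := dvdn_order_subadd x_neq0.
have q_gt0 : (0 < q)%N.
  by have := order_gt0 subadd x; rewrite order_x muln_gt0 => /andP[].
have := order_subadd_dvd x; rewrite order_x dvdn_pmul2r // => q_dvd4.
have q_le4 : (q <= 4)%N by apply: dvdn_leq.
case: q q_gt0 q_dvd4 q_le4 {order_x} => [|[|[|[|[|q]]]]] //= *.
- by apply: Or31; rewrite mul1n.
- by apply: Or32; rewrite mulnC.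
- by apply: Or33; rewrite mulnC.
Qed.

Definition secondary_points :=
  [set x : F * F | (order subadd x != 4 * t)%N && (order subadd x != 1)%N].

Lemma mem_secondary_points x :
  (x \in secondary_points) = (x != 0) && (iter (2 * t) subadd x == x).
Proof.
rewrite inE order_subadd_eq1 andbC; have [-> | x_neq0] := eqVneq x 0 => //=.
rewrite -forder_dvdn //.
have := t_gt0; case: (order_subadd_cases x_neq0) => ->.
- by rewrite (dvdn_mull 2 (dvdnn t)); lia.
- by rewrite dvdnn; lia.
- by rewrite eqxx => ?; apply/esym/negP => /dvdn_leq; lia.
Qed.

Lemma secondary_points_even : ~~ odd t -> secondary_points = set0.
Proof.
move=> t_even; have t_half : t = (t./2).*2.
  by rewrite -{1}(odd_double_half t) (negbTE t_even).
apply/setP => x; rewrite in_set0 mem_secondary_points iter_subadd_double.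
rewrite (negbTE t_even) muln0 /=; apply/negbTE/nandP.
have [x0 | x_neq0] := eqVneq x 0; [by left | right].
rewrite dilate_eq_id // -(prim_order_dvd prim_m4); apply/negP => /dvdn_leq; lia.
Qed.

Lemma secondary_points_odd : odd t ->
  secondary_points = [set dilate b (- ((-4) ^+ t./2 *+ 2), 1) | b in [set~ 0]].
Proof.
move=> t_odd; set u : F := (-4) ^+ t./2.
have u2 : -4 * u ^+ 2 = 1.
  rewrite -exprM -exprS -[X in _ = X](prim_expr_order prim_m4); congr (_ ^+ _).
  by rewrite -[in RHS](odd_double_half t) t_odd add1n muln2.
apply/setP => x; rewrite mem_secondary_points iter_subadd_double t_odd muln1.
rewrite iter2_subadd -/u /dilate; apply/andP/imsetP => [[] | [b b_neq0 ->]].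
  case: x => a b /[swap] /eqP[<- _] x_neq0; exists b.
    by rewrite !inE; apply: contraNneq x_neq0 => ->; rewrite mul0rn oppr0 mulr0.
  by rewrite /= mulr1; congr pair; ring.
split.
  rewrite !inE /= mulr1 in b_neq0 *.
  by apply: contra b_neq0 => /eqP[_ ->].
apply/eqP; rewrite /= mulr1; congr pair; first ring.
by transitivity (b * (-4 * u ^+ 2)); [ring | rewrite u2 mulr1].
Qed.

Lemma card_secondary_points :
  #|secondary_points| = if odd t then #|F|.-1 else 0%N.
Proof.
case: ifP => [t_odd | /negbT t_even].
  rewrite secondary_points_odd // card_in_imset ?cardsC1 //.
  by move=> b c _ _ /(congr1 snd); rewrite /= !mulr1.
by rewrite secondary_points_even ?cards0.
Qed.

Lemma secondary_points_order :
  exists2 s, s = t \/ s = (2 * t)%N &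
    {in secondary_points, forall x, order subadd x = s}.
Proof.
have [S0 | [x0 x0_sec]] := set_0Vmem secondary_points.
  by exists t; [left | rewrite S0 => x; rewrite inE].
exists (order subadd x0).
  have := x0_sec; rewrite mem_secondary_points => /andP[x0_neq0 _].
  have := x0_sec; rewrite inE => /andP[not_4t _].
  by case: (order_subadd_cases x0_neq0) not_4t => ->; rewrite ?eqxx; auto.
have t_odd : odd t.
  by apply: contraTT x0_sec => /secondary_points_even ->; rewrite inE.
move=> x; move: x0_sec; rewrite secondary_points_odd //.
move=> /imsetP[b0 + ->] /imsetP[b + ->]; rewrite !inE => b0_neq0 b_neq0.
by rewrite !order_subadd_dilate.
Qed.

Lemma card_order_subadd_4t :
  #|[set x : F * F | order subadd x == 4 * t]%N| =
    (#|F| ^ 2 - 1 - #|secondary_points|)%N.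
Proof.
have -> : [set x : F * F | order subadd x == 4 * t]%N =
    ~: ((0 : F * F) |: secondary_points).
  apply/setP => x; rewrite !inE -order_subadd_eq1.
  case: eqP => [-> | _] /=; last by rewrite orbN.
  by rewrite orbF; apply/esym/eqP; lia.
have := cardsC ((0 : F * F) |: secondary_points).
rewrite cardsU1 card_prod inE order_subadd_eq1 eqxx andbF mulnn /=; lia.
Qed.

End SubAddFinField.

Section SubAddDigraph.

Variables (p t : nat).
Hypotheses (p_prime : prime p) (p_odd : odd p).

Local Notation k := (4 * t)%N.

Lemma Fp_two_neq0 : (2%:R : 'F_p) != 0.
Proof.
rewrite -(dvdn_pcharf (pchar_Fp p_prime)) dvdn_prime2 //.
by apply: contraL p_odd => /eqP ->.
Qed.

Let subadd_Fp_inj := subadd_inj Fp_two_neq0.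

Lemma dcycle_subadd_arc C : dcycleb (@subadd_arc p) C = (C \in orbits subadd).
Proof. exact: dcycle_orbits subadd_Fp_inj C. Qed.

Lemma mem_secondary_cycles C : C \in secondary_cycles p k ->
  exists2 x, x \in secondary_points 'F_p t & C = orbit_set subadd x.
Proof.
rewrite inE dcycle_subadd_arc => /andP[/imsetP[x _ ->]].
by rewrite card_orbit_set; exists x; rewrite ?inE.
Qed.

Lemma card_secondary_cycles s :
  {in secondary_points 'F_p t, forall x, order subadd x = s} ->
  (#|secondary_cycles p k| * s = #|secondary_points 'F_p t|)%N.
Proof.
move=> order_s; have -> : secondary_cycles p k =
    [set C in orbits subadd | (#|C| != k) && (#|C| != 1)]%N.
  by apply/setP => C; rewrite !inE dcycle_subadd_arc.
rewrite (card_orbits_uniform subadd_Fp_inj (n := s)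
           (P := fun n => (n != k) && (n != 1))%N) //.
by move=> x x_S; apply: order_s; rewrite inE.
Qed.

Hypothesis ht : is_mult_order (-4 : 'F_p) t.

Lemma card_primary_cycles :
  (#|primary_cycles p k| * k = p ^ 2 - 1 - #|secondary_points 'F_p t|)%N.
Proof.
have -> : primary_cycles p k = [set C in orbits subadd | #|C| == k]%N.
  by apply/setP => C; rewrite !inE dcycle_subadd_arc.
rewrite (card_orbits_uniform subadd_Fp_inj (n := k) (P := fun n => n == k)%N).
  by rewrite (card_order_subadd_4t Fp_two_neq0 ht) card_Fp.
by move=> x /eqP.
Qed.

End SubAddDigraph.

Theorem proposition7p6 (p t : nat) (hp : prime p) (hodd : odd p)
  (ht : is_mult_order (-4 : 'F_p) t) :
  let k := (4 * t)%N in
  (secondary_cycles p k = set0 ->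
     (#|primary_cycles p k| * k = p ^ 2 - 1)%N) /\
  (secondary_cycles p k != set0 ->
     exists s : nat, (s = t \/ s = (2 * t)%N) /\
       (forall C, C \in secondary_cycles p k -> #|C| = s) /\
       (#|secondary_cycles p k| * s = p - 1)%N /\
       (#|primary_cycles p k| * k = p ^ 2 - p)%N).
Proof.
move=> k; have two_neq0 := Fp_two_neq0 hp hodd.
have [s s_t order_s] := secondary_points_order two_neq0 ht.
have card_sec := card_secondary_cycles hp hodd order_s.
have card_prim := card_primary_cycles hp hodd ht.
have s_gt0 : (0 < s)%N.
  by case: ht => t_gt0 _; case: s_t => ->; rewrite ?muln_gt0.
have p_gt1 := prime_gt1 hp.
have := card_secondary_points two_neq0 ht; rewrite card_Fp //.
case: ifP => _ card_S; rewrite card_S in card_sec card_prim; split => sec0.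
- by move: card_sec; rewrite sec0 cards0; lia.
- exists s; split=> //; split; last by rewrite card_sec card_prim; split; lia.
  move=> C /(mem_secondary_cycles hp hodd)[x x_S ->].
  by rewrite card_orbit_set order_s.
- by rewrite card_prim subn0.
- move: card_sec => /eqP; rewrite muln_eq0 (gtn_eqF s_gt0) cards_eq0.
  by rewrite (negbTE sec0).
Qed.
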